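(* Unpruned multiplication is an associative binary operation on $UT^1(\Sigma)$, and the isomorphism type of the trivial tree is an identity element for it. The set $UT(\Sigma)$ of isomorphism types of non-trivial trees is a subsemigroup of $UT^1(\Sigma)$. The maps $X\mapsto X^{(+)}$ and $X\mapsto X^{( * )}$ are idempotent unary operations on $UT^1(\Sigma)$, and the subsemigroup generated by their images is commutative.
   Context: Let $\Sigma$ be a set. A $\Sigma$-tree is a finite directed graph whose underlying undirected graph is a tree, edges labelled by elements of $\Sigma$, with distinguished start and end vertices such that there is a (possibly empty) directed path from the start vertex to the end vertex; it is trivial if it has only one vertex. Isomorphism of $\Sigma$-trees means a label-preserving graph isomorphism preserving start and end vertices. $UT^1(\Sigma)$ is the set of isomorphism types of $\Sigma$-trees. Unpruned multiplication: $X\times Y$ is obtained from disjoint representatives of $X$ and $Y$ by identifying the end vertex of $X$ with the start vertex of $Y$, with start vertex that of $X$ and end vertex that of $Y$. $X^{(+)}$ is the tree with the same graph and start vertex as $X$ but with end vertex equal to the start vertex; $X^{( * )}$ has the same graph and end vertex as $X$ but start vertex equal to the end vertex. *)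

From mathcomp Require Import all_boot.
Set Implicit Arguments. Unset Strict Implicit. Unset Printing Implicit Defensive.

(* A raw Sigma-graph: a finite vertex type, a (partial) labelled edge
   relation [E u v = Some a] meaning a directed edge u -> v labelled a,
   a start vertex and an end vertex.  At most one edge per ordered pair is
   allowed by this encoding; this loses nothing for trees, since two
   parallel edges would form a cycle of the underlying undirected graph. *)
Record sgraph (Sigma : Type) : Type := SGraph {
  V  : finType;
  E  : V -> V -> option Sigma;
  st : V;
  en : V }.

Section Trees.
Variable Sigma : Type.
Implicit Types X Y Z : sgraph Sigma.

Definition uadj X : rel (V X) := fun u v => isSome (E u v) || isSome (E v u).
Definition dadj X : rel (V X) := fun u v => isSome (E u v).

Definition is_tree X : Prop :=
  [/\ (forall v : V X, E v v = None),
      (forall u v : V X, E u v = None \/ E v u = None),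
      (forall u v : V X, connect (@uadj X) u v),
      (forall s : seq (V X), uniq s -> 3 <= size s -> ~~ cycle (@uadj X) s)
    & connect (@dadj X) (st X) (en X)].

Definition trivial X : Prop := #|V X| = 1.
Definition nontrivial X : Prop := 1 < #|V X|.

Definition iso X Y : Prop :=
  exists f : V X -> V Y,
    [/\ bijective f,
        (forall u v : V X, E (f u) (f v) = E u v),
        f (st X) = st Y
      & f (en X) = en Y].

Definition one_tree : sgraph Sigma :=
  @SGraph Sigma unit (fun _ _ => None) tt tt.

(* unpruned multiplication: glue en X with st Y.  Vertex type is
   V X + (V Y minus st Y); st Y is represented by en X. *)
Definition mulV X Y : finType := (V X + {v : V Y | v != st Y})%type.

Definition inj2 X Y (v : V Y) : mulV X Y :=
  match insub v with Some w => inr w | None => inl (en X) end.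

Definition mulE X Y (a b : mulV X Y) : option Sigma :=
  match a, b with
  | inl a, inl b => E a b
  | inr a, inr b => E (val a) (val b)
  | inl a, inr b => if a == en X then E (st Y) (val b) else None
  | inr a, inl b => if b == en X then E (val a) (st Y) else None
  end.

Definition tmul X Y : sgraph Sigma :=
  @SGraph Sigma (mulV X Y) (@mulE X Y) (inl (st X)) (inj2 X (en Y)).

Definition tplus X : sgraph Sigma := @SGraph Sigma (V X) (@E _ X) (st X) (st X).
Definition tstar X : sgraph Sigma := @SGraph Sigma (V X) (@E _ X) (en X) (en X).

(* the subsemigroup of UT^1 generated by the images of plus and star,
   as a predicate on representatives, closed under isomorphism *)
Inductive gen_plus_star : sgraph Sigma -> Prop :=
  | gen_plus X : is_tree X -> gen_plus_star (tplus X)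
  | gen_star X : is_tree X -> gen_plus_star (tstar X)
  | gen_mul X Y : gen_plus_star X -> gen_plus_star Y -> gen_plus_star (tmul X Y)
  | gen_iso X Y : gen_plus_star X -> iso X Y -> gen_plus_star Y.

End Trees.

From mathcomp Require Import all_boot.
Set Implicit Arguments. Unset Strict Implicit. Unset Printing Implicit Defensive.

(* In [tmul X Y] the copies of [X] and [Y] share only the vertex [en X = st Y],
   which is a cut vertex: a path from the [X]-side to the [Y]-side must pass
   through it, so a simple cycle, visiting it at most once, stays on one side
   and is a cycle of [X] or of [Y]. Connectivity and the directed path from
   start to end compose through the same vertex. Isomorphisms of the factors
   glue to an isomorphism of the products, and associativity and the unit laws
   are explicit relabellings of vertices. Every element generated by the
   images of plus and star has its start equal to its end; two such trees are
   glued root to root, which is symmetric. *)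

Lemma homo_connect (T T' : finType) (e : rel T) (e' : rel T') (f : T -> T') :
  {homo f : x y / e x y >-> e' x y} ->
  {homo f : x y / connect e x y >-> connect e' x y}.
Proof.
move=> fe x _ /connectP[p ep ->]; elim: p x ep => [|y p IH] x /=.
  by rewrite connect0.
by case/andP=> exy /IH; apply: connect_trans; apply/connect1/fe.
Qed.

Lemma eq_inl (A B : eqType) (a a' : A) : (inl a == inl a' :> A + B) = (a == a').
Proof. by []. Qed.

Lemma path_through_cut (T : eqType) (e : rel T) (a b : pred T) (g : T) :
  (forall v, a v -> ~~ b v) -> (forall v, [|| a v, b v | v == g]) ->
  (forall u v, e u v -> a u -> ~~ b v) ->
  forall x p, path e x p -> a x -> b (last x p) -> g \in p.
Proof.
move=> ab_disjoint cover eab x p; elim: p x => [|y p IH] x /=.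
  by move=> _ /ab_disjoint/negbTE->.
case/andP=> exy eyp ax bp; rewrite inE.
case/or3P: (cover y) => [ay|b_y|/eqP->]; [by rewrite (IH y) ?orbT | | by rewrite eqxx].
by have := eab _ _ exy ax; rewrite b_y.
Qed.

Lemma cycle_one_side_of_cut (T : eqType) (e : rel T) (a b : pred T) (g : T) :
  (forall v, a v -> ~~ b v) -> (forall v, [|| a v, b v | v == g]) ->
  (forall u v, e u v -> a u -> ~~ b v) -> (forall u v, e u v -> b u -> ~~ a v) ->
  ~~ a g -> ~~ b g ->
  forall s, uniq s -> cycle e s -> has a s -> ~~ has b s.
Proof.
move=> ab_disjoint cover eab eba ag bg s us cs /hasP[x sx ax].
apply/hasP=> -[y sy b_y].
have [i s' def_s] := rot_to sx.
have ys' : y \in s'.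
  move: sy; rewrite -(mem_rot i) def_s inE => /predU1P[yx|//].
  by move: (ab_disjoint _ ax); rewrite -yx b_y.
have : uniq (x :: s') /\ cycle e (x :: s') by rewrite -def_s rot_uniq rot_cycle.
case/splitPr: ys' => p1 p2 [us'].
rewrite /= rcons_cat /= cat_path /= => /andP[ep1 /andP[ey ep2]].
have : g \in rcons p1 y.
  apply: (path_through_cut ab_disjoint cover eab (x := x)) => //.
    by rewrite rcons_path ep1 ey.
  by rewrite last_rcons.
rewrite mem_rcons inE; case: eqP => [gy|_ /= g_p1]; first by rewrite gy b_y in bg.
have : g \in rcons p2 x.
  have ba_disjoint v : b v -> ~~ a v by apply: contraL => /ab_disjoint.
  have cover' v : [|| b v, a v | v == g] by rewrite orbA (orbC (b v)) -orbA.
  by apply: (path_through_cut ba_disjoint cover' eba (x := y)); rewrite ?last_rcons.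
rewrite mem_rcons inE; case: eqP => [gx|_ /= g_p2]; first by rewrite gx ax in ag.
move: us'; rewrite cons_uniq cat_uniq => /andP[_ /and3P[_ /hasPn/(_ g) +_]].
by rewrite inE g_p2 orbT g_p1 => /(_ isT).
Qed.

Section Trees.
Variable Sigma : Type.
Implicit Types X Y Z : sgraph Sigma.

Definition loopless X := forall v : V X, E v v = None.
Definition oriented X := forall u v : V X, E u v = None \/ E v u = None.
Definition connected X := forall u v : V X, connect (@uadj _ X) u v.
Definition acyclic X :=
  forall s : seq (V X), uniq s -> 3 <= size s -> ~~ cycle (@uadj _ X) s.

Lemma tree_loopless X : is_tree X -> loopless X.
Proof. by case. Qed.

Lemma uadjC X : symmetric (@uadj _ X).
Proof. by move=> u v; rewrite /uadj orbC. Qed.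

Lemma inj2_st X Y : inj2 X (st Y) = inl (en X).
Proof. by rewrite /inj2 insubF ?eqxx. Qed.

Lemma inj2_val X Y (w : {v : V Y | v != st Y}) : inj2 X (val w) = inr w.
Proof. by rewrite /inj2 valK. Qed.

Lemma inj2_inj X Y : injective (@inj2 _ X Y).
Proof.
move=> b b'; rewrite /inj2.
by case: insubP => [w _ <-|/negbNE/eqP->]; case: insubP => [w' _ <-|/negbNE/eqP->] // [->].
Qed.

Lemma inj2_inr X Y b : b != st Y -> exists w, inj2 X b = inr w.
Proof. by move=> bY; exists (Sub b bY); rewrite -inj2_val. Qed.

Lemma eq_inj2 X Y b b' : (@inj2 _ X Y b == inj2 X b') = (b == b').
Proof. by apply/eqP/eqP => [/inj2_inj|->]. Qed.

Lemma inj2_eq_inl X Y b a : b != st Y -> (@inj2 _ X Y b == inl a) = false.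
Proof. by move=> bY; rewrite /inj2 insubT. Qed.

Variant mulV_spec X Y : mulV X Y -> Type :=
  | MulL (a : V X) : mulV_spec (inl a)
  | MulR (b : V Y) : b != st Y -> mulV_spec (inj2 X b).

Lemma mulVP X Y u : @mulV_spec X Y u.
Proof. by case: u => [a|w]; [apply: MulL | rewrite -inj2_val; exact: MulR (valP w)]. Qed.

Lemma card_mulV X Y : #|{: mulV X Y}| = #|V X| + (#|V Y|).-1.
Proof. by rewrite card_sum card_sig -(cardC1 (st Y)). Qed.

Lemma mulE_inl X Y a a' : @E _ (tmul X Y) (inl a) (inl a') = E a a'.
Proof. by []. Qed.

Lemma mulE_inl_inj2 X Y a b : @E _ (tmul X Y) (inl a) (inj2 X b) =
  if b == st Y then E a (en X) else if a == en X then E (st Y) b else None.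
Proof.
rewrite /inj2; case: insubP => [w bY wb|/negbNE/eqP->] /=; last by rewrite eqxx.
by rewrite wb (negbTE bY).
Qed.

Lemma mulE_inj2_inl X Y a b : @E _ (tmul X Y) (inj2 X b) (inl a) =
  if b == st Y then E (en X) a else if a == en X then E b (st Y) else None.
Proof.
rewrite /inj2; case: insubP => [w bY wb|/negbNE/eqP->] /=; last by rewrite eqxx.
by rewrite wb (negbTE bY).
Qed.

(* Looplessness matters at [b = b' = st Y]: the glued vertex carries the loop
   of [en X], not that of [st Y]. *)
Lemma mulE_inj2 X Y b b' : loopless X -> loopless Y ->
  @E _ (tmul X Y) (inj2 X b) (inj2 X b') = E b b'.
Proof.
move=> lX lY; rewrite /inj2.
by case: insubP => [w bY <-|/negbNE/eqP->]; case: insubP => [w' bY' <-|/negbNE/eqP->] //=;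
  rewrite ?eqxx ?lX ?lY.
Qed.

Lemma loopless_tmul X Y : loopless X -> loopless Y -> loopless (tmul X Y).
Proof. by move=> lX lY [a|w] /=. Qed.

Lemma oriented_tmul X Y : loopless X -> loopless Y ->
  oriented X -> oriented Y -> oriented (tmul X Y).
Proof.
move=> lX lY oX oY u v.
case: (mulVP u) => [a|b bY]; case: (mulVP v) => [a'|b' bY'].
- exact: oX.
- by rewrite mulE_inl_inj2 mulE_inj2_inl (negbTE bY'); case: eqP => _; [apply: oY | left].
- by rewrite mulE_inl_inj2 mulE_inj2_inl (negbTE bY); case: eqP => _; [apply: oY | left].
- by rewrite !mulE_inj2 //; apply: oY.
Qed.

Lemma uadj_inj2 X Y b b' : loopless X -> loopless Y ->
  @uadj _ (tmul X Y) (inj2 X b) (inj2 X b') = uadj b b'.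
Proof. by move=> lX lY; rewrite /uadj !mulE_inj2. Qed.

Lemma connected_tmul X Y : loopless X -> loopless Y ->
  connected X -> connected Y -> connected (tmul X Y).
Proof.
move=> lX lY cX cY.
have to_glue (u : V (tmul X Y)) : connect (@uadj _ (tmul X Y)) u (inl (en X)).
  case: u => [a|w]; first by apply: (homo_connect (e := @uadj _ X)).
  rewrite -inj2_val -(inj2_st X Y).
  by apply: (homo_connect (e := @uadj _ Y)) => // y y'; rewrite uadj_inj2.
move=> u v; apply: connect_trans (to_glue u) _.
by rewrite (sym_connect_sym (@uadjC (tmul X Y))).
Qed.

Lemma acyclic_tmul X Y : loopless X -> loopless Y ->
  acyclic X -> acyclic Y -> acyclic (tmul X Y).
Proof.
move=> lX lY aX aY s us s3; apply/negP=> cs.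
have lift Z (f : V Z -> V (tmul X Y)) t : acyclic Z -> injective f ->
    (forall z z', uadj (f z) (f z') = uadj z z') -> map f t = s -> False.
  move=> aZ fi fE def_s; move: us s3 cs; rewrite -def_s (map_inj_uniq fi) size_map.
  by rewrite cycle_map (eq_cycle fE) => /aZ aZt /aZt/negP.
pose left_side (u : V (tmul X Y)) := if u is inl a then a != en X else false.
pose right_side (u : V (tmul X Y)) := if u is inr _ then true else false.
have no_cross u v : uadj u v -> left_side u -> ~~ right_side v.
  by case: u v => [a|w] [b|w'] //=; rewrite /uadj /=; case: eqP => //; case: eqP.
have no_cross' u v : uadj u v -> right_side u -> ~~ left_side v.
  by rewrite uadjC => /no_cross; apply: contraTN.
have disjoint u : left_side u -> ~~ right_side u by case: u.
have cover u : [|| left_side u, right_side u | u == inl (en X)].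
  case: u => [a|w] //=; apply/orP.
  by case: (a =P en X) => [->|/eqP]; [right; rewrite eqxx | left].
have glue_not_left : ~~ left_side (inl (en X)) by rewrite /= negbK.
have one_side : has left_side s -> ~~ has right_side s :=
  cycle_one_side_of_cut disjoint cover no_cross no_cross' glue_not_left isT us cs.
have [sR|sR] := boolP (has right_side s).
- apply: (lift Y (@inj2 _ X Y) [seq if u is inr w then val w else st Y | u <- s]) => //.
  + exact: inj2_inj.
  + by move=> b b'; rewrite uadj_inj2.
  rewrite -map_comp map_id_in // => u su /=.
  case: u su => [a sa|w _]; last exact: inj2_val.
  have /hasPn/(_ _ sa) := contraL one_side sR; rewrite /= negbK => /eqP->.
  exact: inj2_st.
- pose left_part (u : V (tmul X Y)) := if u is inl a then Some a else None.
  apply: (lift X inl (pmap left_part s)) => //.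
  + by move=> a a' [].
  rewrite pmap_filter; last by case.
  by apply/all_filterP/allP=> [[a|w] // sw]; case/hasP: sR; exists (inr w).
Qed.

Lemma is_tree_tmul X Y : is_tree X -> is_tree Y -> is_tree (tmul X Y).
Proof.
case=> lX oX cX aX dX [lY oY cY aY dY]; split.
- exact: loopless_tmul.
- exact: oriented_tmul.
- exact: connected_tmul.
- exact: acyclic_tmul.
- apply: (@connect_trans _ _ (inl (en X) : V (tmul X Y))).
    by apply: (homo_connect (e := @dadj _ X)).
  rewrite -inj2_st; apply: (homo_connect (e := @dadj _ Y)) => // b b'.
  by rewrite /dadj mulE_inj2.
Qed.

Lemma is_tree_tplus X : is_tree X -> is_tree (tplus X).
Proof. by case=> *; split=> //; apply: connect0. Qed.

Lemma is_tree_tstar X : is_tree X -> is_tree (tstar X).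
Proof. by case=> *; split=> //; apply: connect0. Qed.

Lemma is_tree_one : is_tree (one_tree Sigma).
Proof.
split=> //; first by left.
- by move=> [] []; apply: connect0.
- by move=> s /card_uniqP <- /leq_trans/(_ (max_card _)); rewrite card_unit.
Qed.

Lemma iso_refl X : iso X X.
Proof. by exists id; split=> //; exists id. Qed.

Lemma inj_card_iso X Y (f : V X -> V Y) : injective f -> #|V Y| <= #|V X| ->
  (forall u v, E (f u) (f v) = E u v) -> f (st X) = st Y -> f (en X) = en Y -> iso X Y.
Proof. by move=> fi card_YX fE f_st f_en; exists f; split=> //; apply: inj_card_bij. Qed.

Lemma iso_card X Y : iso X Y -> #|V X| = #|V Y|.
Proof. by case=> f [fb _ _ _]; apply: bij_eq_card fb. Qed.

Lemma iso_loopless X Y : iso X Y -> loopless X -> loopless Y.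
Proof. by case=> f [[g _ gK] fE _ _] lX v; rewrite -(gK v) fE lX. Qed.

Lemma iso_tplus X Y : iso X Y -> iso (tplus X) (tplus Y).
Proof. by case=> f [fb fE f_st _]; exists f. Qed.

Lemma iso_tstar X Y : iso X Y -> iso (tstar X) (tstar Y).
Proof. by case=> f [fb fE _ f_en]; exists f. Qed.

Lemma card_V_gt0 X : 0 < #|V X|.
Proof. by apply/card_gt0P; exists (st X). Qed.

Lemma iso_tmul X X' Y Y' : loopless X -> loopless Y ->
  iso X X' -> iso Y Y' -> iso (tmul X Y) (tmul X' Y').
Proof.
move=> lX lY isoX isoY.
have lX' := iso_loopless isoX lX; have lY' := iso_loopless isoY lY.
have cardX := iso_card isoX; have cardY := iso_card isoY.
case: isoX => f [/bij_inj fi fE f_st f_en]; case: isoY => g [/bij_inj gi gE g_st g_en].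
pose h (u : V (tmul X Y)) : V (tmul X' Y') :=
  match u with inl a => inl (f a) | inr w => inj2 X' (g (val w)) end.
have h_inl a : h (inl a) = inl (f a) by [].
have h_inj2 b : h (inj2 X b) = inj2 X' (g b).
  rewrite {1}/inj2; case: insubP => [w _ <- //|/negbNE/eqP->].
  by rewrite h_inl f_en g_st inj2_st.
apply: (@inj_card_iso _ _ h).
- move=> u v; case: (mulVP u) => [a|b bY]; case: (mulVP v) => [a'|b' bY'];
    rewrite ?h_inj2.
  + by case=> /fi->.
  + by move=> /esym/eqP; rewrite inj2_eq_inl // -g_st inj_eq.
  + by move=> /eqP; rewrite inj2_eq_inl // -g_st inj_eq.
  + by move/inj2_inj/gi->.
- by rewrite !card_mulV cardX cardY.
- move=> u v; case: (mulVP u) => [a|b bY]; case: (mulVP v) => [a'|b' bY'];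
    rewrite ?h_inj2 ?mulE_inl_inj2 ?mulE_inj2_inl ?mulE_inj2 //
      ?mulE_inl -?g_st -?f_en ?inj_eq // ?fE ?gE //.
- by rewrite /= f_st.
- by rewrite h_inj2 g_en.
Qed.

Definition assoc_map X Y Z (u : V (tmul (tmul X Y) Z)) : V (tmul X (tmul Y Z)) :=
  match u with
  | inl (inl a) => inl a
  | inl (inr w) => inj2 X (inl (val w) : V (tmul Y Z))
  | inr z => inj2 X (inj2 Y (val z) : V (tmul Y Z))
  end.

Variant mulV3_spec X Y Z : V (tmul (tmul X Y) Z) -> Type :=
  | Mul3X (a : V X) : mulV3_spec (inl (inl a))
  | Mul3Y (b : V Y) : b != st Y -> mulV3_spec (inl (inj2 X b))
  | Mul3Z (c : V Z) : c != st Z -> mulV3_spec (inj2 (tmul X Y) c).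

Lemma mulV3P X Y Z u : @mulV3_spec X Y Z u.
Proof.
case: (mulVP u) => [a|c cZ]; last exact: Mul3Z.
by case: (mulVP a) => [a'|b bY]; [apply: Mul3X | apply: Mul3Y].
Qed.

Lemma iso_tmulA X Y Z : loopless X -> loopless Y -> loopless Z ->
  iso (tmul (tmul X Y) Z) (tmul X (tmul Y Z)).
Proof.
move=> lX lY lZ; have lXY := loopless_tmul lX lY; have lYZ := loopless_tmul lY lZ.
have mapX a : assoc_map (inl (inl a) : V (tmul (tmul X Y) Z)) = inl a by [].
have mapY b : assoc_map (inl (inj2 X b) : V (tmul (tmul X Y) Z)) =
    inj2 X (inl b : V (tmul Y Z)).
  rewrite {1}/inj2; case: insubP => [w _ <- //|/negbNE/eqP->].
  by rewrite mapX [RHS](inj2_st X (tmul Y Z)).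
have mapZ c : assoc_map (inj2 (tmul X Y) c) = inj2 X (inj2 Y c : V (tmul Y Z)).
  rewrite {1}/inj2; case: insubP => [w _ <- //|/negbNE/eqP->].
  by rewrite mapY inj2_st.
have YZ_inl b : b != st Y -> (inl b : V (tmul Y Z)) != st (tmul Y Z) by [].
have YZ_inj2 c : c != st Z -> (inj2 Y c : V (tmul Y Z)) != st (tmul Y Z).
  by case/(inj2_inr Y) => w ->.
apply: (@inj_card_iso _ _ (@assoc_map X Y Z)).
- move=> u v; case: (mulV3P u) => [a|b bY|c cZ]; case: (mulV3P v) => [a'|b' bY'|c' cZ'];
    rewrite ?mapY ?mapZ.
  + by case=> ->.
  + by move=> /esym/eqP; rewrite inj2_eq_inl //; apply: YZ_inl.
  + by move=> /esym/eqP; rewrite inj2_eq_inl ?YZ_inj2.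
  + by move=> /eqP; rewrite inj2_eq_inl //; apply: YZ_inl.
  + by move/inj2_inj; case=> ->.
  + by move/inj2_inj/eqP; rewrite eq_sym inj2_eq_inl.
  + by move=> /eqP; rewrite inj2_eq_inl ?YZ_inj2.
  + by move/inj2_inj/eqP; rewrite inj2_eq_inl.
  + by move/inj2_inj/inj2_inj->.
- by rewrite !card_mulV /=; case: #|V Y| (card_V_gt0 Y) => // n _; rewrite addnA.
- move=> u v; case: (mulV3P u) => [a|b bY|c cZ]; case: (mulV3P v) => [a'|b' bY'|c' cZ'];
    rewrite ?mapY ?mapZ ?mulE_inl ?(mulE_inj2 _ _ lXY lZ)
      ?(mulE_inj2 _ _ lX lYZ) ?mulE_inl_inj2 ?mulE_inj2_inl ?(mulE_inj2 _ _ lX lY)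
      ?(mulE_inj2 _ _ lY lZ) ?eq_inj2
      ?(negbTE cZ) ?(negbTE cZ') ?inj2_eq_inl //;
    (rewrite /=; case: (en Y =P st Y) => [enY|/eqP enY];
      [rewrite enY inj2_st ?eq_inl ?eqxx | have [w ->] := inj2_inr X enY;
        rewrite [_ == en Y]eq_sym (negbTE enY)];
    by case: (_ == en X)).
- by [].
- by rewrite /= mapZ.
Qed.

Lemma iso_tmul1l X : loopless X -> iso (tmul (one_tree Sigma) X) X.
Proof.
move=> lX; pose h (u : V (tmul (one_tree Sigma) X)) := if u is inr w then val w else st X.
have h_inj2 b : h (inj2 (one_tree Sigma) b) = b.
  by rewrite {1}/inj2; case: insubP => [w _ <- //|/negbNE/eqP->].
apply: (@inj_card_iso _ _ h).
- move=> u v; case: (mulVP u) => [[]|b bX]; case: (mulVP v) => [[]|b' bX'];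
    rewrite ?h_inj2 //= => hE.
  + by move: bX'; rewrite -hE eqxx.
  + by move: bX; rewrite hE eqxx.
  + by rewrite hE.
- by rewrite card_mulV card_unit add1n prednK ?card_V_gt0.
- move=> u v; case: (mulVP u) => [[]|b bX]; case: (mulVP v) => [[]|b' bX'];
    by rewrite ?h_inj2 ?mulE_inl_inj2 ?mulE_inj2_inl ?(mulE_inj2 _ _ _ lX)
      ?(negbTE bX) ?(negbTE bX').
- by [].
- exact: h_inj2.
Qed.

Lemma iso_tmul1r X : iso (tmul X (one_tree Sigma)) X.
Proof.
pose h (u : V (tmul X (one_tree Sigma))) := if u is inl a then a else en X.
apply: (@inj_card_iso _ _ h).
- by move=> [a|[[] //]] [a'|[[] //]] /= ->.
- by rewrite card_mulV card_unit addn0.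
- by move=> [a|[[] //]] [a'|[[] //]].
- by [].
- by rewrite /= [inj2 _ _](inj2_st X (one_tree Sigma)).
Qed.

Lemma gen_plus_star_loopless X : gen_plus_star X -> loopless X.
Proof.
elim=> {X} [X /tree_loopless //|X /tree_loopless //|X Y _ lX _ lY|X Y _ lX isoXY].
  exact: loopless_tmul.
exact: iso_loopless isoXY lX.
Qed.

Lemma gen_plus_star_st_en X : gen_plus_star X -> st X = en X.
Proof.
elim=> {X} [//|//|X Y _ eX _ eY|X Y _ eX [f [_ _ <- <-]]]; last by rewrite eX.
by rewrite /= -eY inj2_st eX.
Qed.

Lemma iso_tmulC X Y : loopless X -> loopless Y -> st X = en X -> st Y = en Y ->
  iso (tmul X Y) (tmul Y X).
Proof.
move=> lX lY eX eY.
pose h (u : V (tmul X Y)) : V (tmul Y X) :=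
  match u with inl a => inj2 Y a | inr w => inl (val w) end.
have h_inl a : h (inl a) = inj2 Y a by [].
have h_inj2 b : h (inj2 X b) = inl b.
  rewrite {1}/inj2; case: insubP => [w _ <- //|/negbNE/eqP->].
  by rewrite h_inl -eX inj2_st eY.
apply: (@inj_card_iso _ _ h).
- move=> u v; case: (mulVP u) => [a|b bY]; case: (mulVP v) => [a'|b' bY'];
    rewrite ?h_inj2 ?h_inl.
  + by move/inj2_inj->.
  + move/eqP; case: (a =P st X) => [->|/eqP aX]; last by rewrite inj2_eq_inl.
    by rewrite inj2_st eq_inl => /eqP enb; rewrite -enb -eY eqxx in bY'.
  + move/esym/eqP; case: (a' =P st X) => [->|/eqP aX]; last by rewrite inj2_eq_inl.
    by rewrite inj2_st eq_inl => /eqP enb; rewrite -enb -eY eqxx in bY.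
  + by case=> ->.
- by rewrite !card_mulV; case: #|V X| (card_V_gt0 X) => // n _;
    case: #|V Y| (card_V_gt0 Y) => // m _; rewrite !addSn addnC.
- move=> u v; case: (mulVP u) => [a|b bY]; case: (mulVP v) => [a'|b' bY'];
    rewrite ?h_inj2 ?mulE_inl_inj2 ?mulE_inj2_inl ?mulE_inj2 //
      -?eX -?eY ?(negbTE bY) ?(negbTE bY') //.
- exact: etrans (inj2_st Y X) (congr1 inl (esym eY)).
- by rewrite /= h_inj2 -eX inj2_st.
Qed.

End Trees.

Theorem proposition4p2 (Sigma : Type) :
  (forall X Y : sgraph Sigma, is_tree X -> is_tree Y -> is_tree (tmul X Y)) /\
  (forall X X' Y Y' : sgraph Sigma, is_tree X -> is_tree Y ->
      iso X X' -> iso Y Y' -> iso (tmul X Y) (tmul X' Y')) /\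
  (forall X Y Z : sgraph Sigma, is_tree X -> is_tree Y -> is_tree Z ->
      iso (tmul (tmul X Y) Z) (tmul X (tmul Y Z))) /\
  (is_tree (one_tree Sigma) /\ trivial (one_tree Sigma) /\
   forall X : sgraph Sigma, is_tree X ->
      iso (tmul (one_tree Sigma) X) X /\ iso (tmul X (one_tree Sigma)) X) /\
  (forall X Y : sgraph Sigma, iso X Y -> nontrivial X -> nontrivial Y) /\
  (forall X Y : sgraph Sigma, is_tree X -> is_tree Y ->
      nontrivial X -> nontrivial Y -> nontrivial (tmul X Y)) /\
  (forall X : sgraph Sigma, is_tree X -> is_tree (tplus X) /\ is_tree (tstar X)) /\
  (forall X Y : sgraph Sigma, is_tree X -> iso X Y ->
      iso (tplus X) (tplus Y) /\ iso (tstar X) (tstar Y)) /\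
  (forall X : sgraph Sigma, is_tree X ->
      iso (tplus (tplus X)) (tplus X) /\ iso (tstar (tstar X)) (tstar X)) /\
  (forall X Y : sgraph Sigma, gen_plus_star X -> gen_plus_star Y ->
      iso (tmul X Y) (tmul Y X)).
Proof.
split; first exact: is_tree_tmul.
split; first by move=> X X' Y Y' /tree_loopless lX /tree_loopless lY; apply: iso_tmul.
split; first by move=> X Y Z /tree_loopless lX /tree_loopless lY /tree_loopless lZ;
  apply: iso_tmulA.
split; first split; [exact: is_tree_one | split; first by rewrite /trivial card_unit |].
  by move=> X /tree_loopless lX; split; [apply: iso_tmul1l | apply: iso_tmul1r].
split; first by move=> X Y /iso_card; rewrite /nontrivial => ->.
split; first by move=> X Y _ _ X1 _; rewrite /nontrivial card_mulV (leq_trans X1) ?leq_addr.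
split; first by move=> X tX; split; [apply: is_tree_tplus | apply: is_tree_tstar].
split; first by move=> X Y _ isoXY; split; [apply: iso_tplus | apply: iso_tstar].
split; first by move=> X _; split; apply: iso_refl.
move=> X Y gX gY; apply: iso_tmulC;
  by [apply: gen_plus_star_loopless | apply: gen_plus_star_st_en].
Qed.
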